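(* Let $D$ be the distance matrix of $n$ points in $\mathbb R^d$ with $n>d+2$, let $C$ be its centered distance matrix, and let $\lambda_2(C)$ denote the second largest eigenvalue of $C$ (counted with multiplicity). Then $D=C+\lambda_2(C)\,J$. In particular $D$ is uniquely determined by $C$, and hence by $\Delta(D)$.
   Context: The distance matrix of points $x_1,\dots,x_n\in\mathbb R^d$ is $D_{ij}=\|x_i-x_j\|_2^2$. Let $J=\mathbf 1\mathbf 1^T-I$. The centered distance matrix of $D$ is $C=D-\sigma_DJ$ with $\sigma_D=\mathrm{tr}(DJ)/\|J\|_F^2$, i.e. the component of $D$ orthogonal to $J$ in the trace inner product. $\Delta(D)=(D_{ij}-D_{ik})$ indexed by triples $(i,j,k)$ of pairwise distinct indices with $j<k$; its kernel on symmetric hollow matrices is the span of $J$. *)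

From HB Require Import structures.
From mathcomp Require Import all_boot all_order all_algebra.
Set Implicit Arguments. Unset Strict Implicit. Unset Printing Implicit Defensive.
Import Order.TTheory GRing.Theory Num.Theory.
Local Open Scope ring_scope.

(* Points x_1..x_n in R^d are the rows of x : 'M_(n,d). *)
Definition dist_mx (R : rcfType) (n d : nat) (x : 'M[R]_(n, d)) : 'M[R]_n :=
  \matrix_(i, j) \sum_(k < d) (x i k - x j k) ^+ 2.

Definition Jmx (R : rcfType) (n : nat) : 'M[R]_n := const_mx 1 - 1%:M.

Definition frob2 (R : rcfType) (n : nat) (A : 'M[R]_n) : R :=
  \sum_(i < n) \sum_(j < n) A i j ^+ 2.

Definition sigma_mx (R : rcfType) (n : nat) (D : 'M[R]_n) : R :=
  \tr (D *m Jmx R n) / frob2 (Jmx R n).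

Definition centered (R : rcfType) (n : nat) (D : 'M[R]_n) : 'M[R]_n :=
  D - sigma_mx D *: Jmx R n.

(* l is the second largest eigenvalue of A counted with multiplicity:
   the characteristic polynomial of A splits as prod (X - s_i) with
   s sorted non-increasingly, and l = s_1 (0-indexed). *)
Definition second_eig (R : rcfType) (n : nat) (A : 'M[R]_n) (l : R) : Prop :=
  exists s : seq R,
    [/\ sorted (>=%R) s, char_poly A = \prod_(a <- s) ('X - a%:P) & s`_1 = l].

(* Delta(D) and Delta(D') agree: D_ij - D_ik = D'_ij - D'_ik for all
   pairwise distinct i, j, k with j < k. *)
Definition same_Delta (R : rcfType) (n : nat) (D D' : 'M[R]_n) : Prop :=
  forall i j k : 'I_n, i != j -> i != k -> (j < k)%N ->
    D i j - D i k = D' i j - D' i k.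

From HB Require Import structures.
From mathcomp Require Import all_boot all_order all_algebra.
From mathcomp Require Import sesquilinear spectral.
From mathcomp.real_closed Require Import complex.
From mathcomp Require Import ring lra zify.
Set Implicit Arguments. Unset Strict Implicit. Unset Printing Implicit Defensive.
Import Order.TTheory GRing.Theory Num.Theory.
Local Open Scope ring_scope.
Local Open Scope sesquilinear_scope.

(* For every t, D - tJ - tI = D - t 11^T, and since D = u 1^T + 1 u^T - 2 X X^T
   (u the squared norms, X the matrix of the points) the quadratic form of
   D - tJ - tI on the hyperplane 1^perp is z |-> -2 |X^T z|^2.  By the min-max
   principle D - tJ therefore has at most one eigenvalue above t (the form is
   nonpositive on a hyperplane) and at most d + 1 eigenvalues below t (it vanishes
   on the orthogonal of 1 and of the d columns of X).  When n > d + 2 the second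
   largest eigenvalue of D - tJ is thus t itself, for every t: with t = sigma_D
   this is D = C + lambda_2(C) J, and if D' = D + cJ, comparing the second
   eigenvalue of D' = D - (-c)J and of D' - 0J gives c = 0.  Equal centerings and
   equal Delta both force D' - D into the span of J.  The spectral theorem is
   used for the Hermitian matrix obtained by viewing D - tJ over R[i]. *)

Lemma nth1_sorted_ge (R : realDomainType) (s : seq R) (t : R) :
  sorted >=%R s -> (count (fun a => (t < a)%R) s <= 1)%N ->
  (1 < count (fun a => (t <= a)%R) s)%N -> s`_1 = t.
Proof.
case: s => [|a [|b s]] //=; first by rewrite addn0; case: (t <= a).
move=> /andP[ab sorted_bs] gt_le1 ge_gt1.
have le_b : all (fun c => c <= b) s.
  by apply: order_path_min sorted_bs => u v w vu wv; apply: le_trans wv vu.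
case: (ltgtP b t) => [bt|tb|//].
- have /eqP : count (fun c => (t <= c)%R) s == 0%N.
    rewrite -leqn0 leqNgt -has_count; apply/hasPn => c /(allP le_b) cb.
    by rewrite -ltNge (le_lt_trans cb bt).
  by move: ge_gt1 => /[swap] ->; rewrite (leNgt t b) bt addn0; case: (t <= a).
- by move: gt_le1; rewrite (lt_le_trans tb ab) tb.
Qed.

Lemma char_poly_conj (R : comNzRingType) n (P Q A : 'M[R]_n) :
  Q *m P = 1%:M -> char_poly (Q *m A *m P) = char_poly A.
Proof.
move=> QP; rewrite /char_poly /char_poly_mx.
have QP' : map_mx polyC Q *m map_mx polyC P = 1%:M by rewrite -map_mxM QP map_mx1.
have -> : 'X%:M - map_mx polyC (Q *m A *m P) =
    map_mx polyC Q *m ('X%:M - map_mx polyC A) *m map_mx polyC P.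
  rewrite mulmxBr mulmxBl !map_mxM; congr (_ - _).
  by rewrite mul_mx_scalar -scalemxAl QP' scalemx1.
by rewrite !det_mulmx mulrC mulrA -det_mulmx (mulmx1C QP') det1 mul1r.
Qed.

Lemma kermx_row_exists (F : fieldType) n m (K : 'M[F]_(n, m)) : (m < n)%N ->
  exists2 c : 'rV[F]_n, c != 0 & c *m K = 0.
Proof.
move=> lt_mn; have : kermx K != 0.
  rewrite -mxrank_eq0 mxrank_ker subn_eq0 -ltnNge.
  exact: leq_ltn_trans (rank_leq_col K) lt_mn.
rewrite -nz_row_eq0 => nz_ker; exists (nz_row (kermx K)) => //.
exact/sub_kermxP/nz_row_sub.
Qed.

Section UnitaryDiagonal.
Variables (C : numClosedFieldType) (n : nat) (P : 'M[C]_n).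
Hypothesis P_unitary : P \is unitarymx.

Lemma form_unitary_diag (w c : 'rV[C]_n) :
  ((c *m P) *m (P^t* *m diag_mx w *m P) *m (c *m P)^t*) 0 0 =
  \sum_k w 0 k * (c 0 k * (c 0 k)^*).
Proof.
rewrite trmx_mul map_mxM !mulmxA !mulmxtVK // mul_mx_diag mxE.
by apply: eq_bigr => k _; rewrite !mxE mulrCA mulrA.
Qed.

Lemma unitary_diag_shift (w : 'rV[C]_n) (t : C) :
  P^t* *m diag_mx w *m P - t%:M = P^t* *m diag_mx (w - const_mx t) *m P.
Proof.
rewrite linearB /= (diag_const_mx n t) mulmxBr mulmxBl mul_mx_scalar -scalemxAl.
by rewrite (mulmx1C (unitarymxP P_unitary)) scalemx1.
Qed.

(* Min-max: a nonzero vector of the kernel of K supported on the positive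
   weights would make the form positive. *)
Lemma card_pos_unitary_diag_le m (w : 'rV[C]_n) (K : 'M[C]_(n, m)) :
  (forall z : 'rV_n, z *m K = 0 ->
     (z *m (P^t* *m diag_mx w *m P) *m z^t*) 0 0 <= 0) ->
  (#|[pred k | (0 < w 0 k)%R]| <= m)%N.
Proof.
move=> form_le0; rewrite leqNgt; apply/negP => lt_mS.
set S := [pred k | (0 < w 0 k)%R] in lt_mS.
pose E : 'M[C]_(#|S|, n) := \matrix_(j, k) (enum_val j == k)%:R.
have [v v_neq0 vK] := kermx_row_exists (E *m P *m K) lt_mS.
pose c := v *m E.
have c_enum j : c 0 (enum_val j) = v 0 j.
  rewrite mxE (bigD1 j) //= big1 => [|i ij]; rewrite !mxE ?eqxx ?mulr1 ?addr0 //.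
  by rewrite (inj_eq enum_val_inj) (negbTE ij) mulr0.
have c_out k : k \notin S -> c 0 k = 0.
  move=> kS; rewrite mxE big1 // => j _; rewrite !mxE.
  by case: eqP => [jk|]; rewrite ?mulr0 //; move: kS; rewrite -jk enum_valP.
have term_ge0 k : true -> 0 <= w 0 k * (c 0 k * (c 0 k)^*).
  move=> _; case: (boolP (k \in S)) => [kS|/c_out ->]; last by rewrite mul0r mulr0.
  exact: mulr_ge0 (ltW kS) (mul_conjC_ge0 _).
have sum_eq0 : \sum_k w 0 k * (c 0 k * (c 0 k)^*) = 0.
  apply/le_anti; rewrite sumr_ge0 // andbT -form_unitary_diag.
  by apply: form_le0; rewrite -!mulmxA [E *m _]mulmxA vK.
move/eqP: v_neq0; apply; apply/rowP => j; rewrite mxE -c_enum.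
have /eqP := @psumr_eq0P _ _ _ _ term_ge0 sum_eq0 (enum_val j) isT.
have w_gt0 : 0 < w 0 (enum_val j) := enum_valP j.
by rewrite mulf_eq0 gt_eqF //= mul_conjC_eq0 => /eqP.
Qed.

End UnitaryDiagonal.

Lemma form_gram_ones (F : comNzRingType) n m (z : 'rV[F]_n) (w e u : 'cV[F]_n)
    (X : 'M[F]_(n, m)) (a b : F) :
  z *m e = 0 -> e^T *m w = 0 ->
  z *m (u *m e^T + e *m u^T - b *: (X *m X^T) - a *: (e *m e^T)) *m w =
  - b *: (z *m X *m (X^T *m w)).
Proof.
move=> ze ew; rewrite !(mulmxBr, mulmxDr, mulmxBl, mulmxDl).
rewrite !(mulmxN, mulNmx) -!scalemxAr -!scalemxAl !mulmxA ze -!(mulmxA _ _ w) ew.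
by rewrite !(mulmx0, mul0mx, scaler0) add0r subr0 sub0r scaleNr.
Qed.

Lemma map_real_trC (R : rcfType) m n (M : 'M[R]_(m, n)) :
  (map_mx (real_complex R) M)^t* = (map_mx (real_complex R) M)^T.
Proof.
by apply/matrixP => i j; rewrite !mxE; apply/CrealP/complex_realP; exists (M j i).
Qed.

Section RealSymmetric.
Variable R : rcfType.
Local Notation rc := (real_complex R).

Lemma symmetric_spectral n (A : 'M[R]_n) : A^T = A ->
  exists (P : 'M[R[i]]_n) (r : 'I_n -> R),
    [/\ P \is unitarymx, map_mx rc A = P^t* *m diag_mx (\row_k rc (r k)) *m P
      & char_poly A = \prod_k ('X - (r k)%:P)].
Proof.
move=> A_sym; set B := map_mx rc A.
have B_herm : B \is hermsymmx.
  apply/is_hermitianmxP; rewrite expr0 scale1r map_real_trC.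
  by rewrite map_trmx A_sym.
have /orthomx_spectralP B_spec := hermitian_normalmx B_herm.
have /mxOverP E_real := hermitian_spectral_diag_real B_herm.
set P := spectralmx B in B_spec; set E := spectral_diag B in B_spec E_real.
have P_unitary : P \is unitarymx := spectral_unitarymx B.
pose r k := complex.Re (E 0 k).
have E_rc : diag_mx E = diag_mx (\row_k rc (r k)).
  by congr diag_mx; apply/rowP => k; rewrite mxE /r RRe_real.
have B_diag : B = P^t* *m diag_mx (\row_k rc (r k)) *m P.
  by rewrite -E_rc -invmx_unitary.
exists P, r; split=> //; apply: (@map_poly_inj _ _ rc).
rewrite map_char_poly -/B B_diag char_poly_conj; last exact/mulmx1C/unitarymxP.
rewrite char_poly_trig ?diag_mx_is_trig // rmorph_prod.
by apply: eq_bigr => k _; rewrite !mxE eqxx mulr1n /= map_polyXsubC.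
Qed.

End RealSymmetric.

Lemma second_eig_eq (R : rcfType) n (A : 'M[R]_n) (r : 'I_n -> R) (t : R) :
  char_poly A = \prod_k ('X - (r k)%:P) ->
  (#|[pred k | (t < r k)%R]| <= 1)%N -> (#|[pred k | (r k < t)%R]| + 2 <= n)%N ->
  (exists l, second_eig A l) /\ (forall l, second_eig A l -> l = t).
Proof.
set rs := [seq r k | k <- enum 'I_n] => chA gt_le1 lt_le.
have {}chA : char_poly A = \prod_(a <- rs) ('X - a%:P) by rewrite big_map big_enum.
have count_rs (p : pred R) : count p rs = #|[pred k | p (r k)]|.
  by rewrite count_map cardE /enum_mem size_filter /enum_mem filter_predT.
split.
  exists (sort >=%R rs)`_1, (sort >=%R rs); split=> //.
    by apply: sort_sorted => u v; rewrite orbC le_total.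
  by rewrite chA; apply: perm_big; rewrite perm_sym perm_sort.
move=> l [s [s_sorted chA' <-]].
have /permP s_rs : perm_eq s rs by apply: prod_XsubC_eq; rewrite -chA' chA.
apply: nth1_sorted_ge; rewrite // !s_rs count_rs //.
have -> : #|[pred k | (t <= r k)%R]| = #|[predC [pred k | (r k < t)%R]]|.
  by apply: eq_card => k; rewrite !inE leNgt.
by move: lt_le; rewrite -[n in (_ <= n)%N]card_ord -(cardC [pred k | (r k < t)%R]) leq_add2l.
Qed.

Lemma Jmx_ones (R : rcfType) n :
  Jmx R n = (const_mx 1 : 'cV_n) *m (const_mx 1)^T - 1%:M.
Proof. by apply/matrixP => i j; rewrite !mxE big_ord1 !mxE mulr1. Qed.

Lemma Jmx_sym (R : rcfType) n : (Jmx R n)^T = Jmx R n.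
Proof. by rewrite linearB /= trmx_const trmx1. Qed.

Lemma subr_scaleJmx_scalar (R : rcfType) n (A : 'M[R]_n) s :
  A - s *: Jmx R n - s%:M = A - s *: ((const_mx 1 : 'cV_n) *m (const_mx 1)^T).
Proof. by rewrite Jmx_ones scalerBr scalemx1 -addrA -opprD subrK. Qed.

Section DistanceMatrix.
Variables (R : rcfType) (n d : nat) (x : 'M[R]_(n, d)).
Local Notation rc := (real_complex R).
Local Notation ones := (const_mx 1 : 'cV[R]_n).

Definition sqnorms : 'cV[R]_n := \col_i \sum_(k < d) x i k ^+ 2.

Lemma dist_mx_gram :
  dist_mx x = sqnorms *m ones^T + ones *m sqnorms^T - 2%:R *: (x *m x^T).
Proof.
apply/matrixP => i j; rewrite !mxE !big_ord1 !mxE mulr1 mul1r mulr_sumr.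
by rewrite -!big_split -sumrB /=; apply: eq_bigr => k _; rewrite !mxE; ring.
Qed.

Lemma dist_mx_sym : (dist_mx x)^T = dist_mx x.
Proof.
by apply/matrixP => i j; rewrite !mxE; apply: eq_bigr => k _; rewrite -opprB sqrrN.
Qed.

Lemma dist_mx_diag i : dist_mx x i i = 0.
Proof. by rewrite mxE big1 // => k _; rewrite subrr expr0n. Qed.

Lemma form_dist_shift s (z : 'rV[R[i]]_n) : z *m map_mx rc ones = 0 ->
  z *m (map_mx rc (dist_mx x - s *: Jmx R n) - (rc s)%:M) *m z^t* =
  - 2%:R *: ((z *m map_mx rc x) *m (z *m map_mx rc x)^t*).
Proof.
move=> z_ones; have ones_z : (map_mx rc ones)^T *m z^t* = 0.
  by rewrite -map_real_trC -map_mxM -trmx_mul z_ones trmx0 map_mx0.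
have -> : map_mx rc (dist_mx x - s *: Jmx R n) - (rc s)%:M =
    map_mx rc (dist_mx x - s *: (ones *m ones^T)).
  by rewrite -subr_scaleJmx_scalar [RHS]map_mxB map_scalar_mx.
have map_gram : map_mx rc (dist_mx x - s *: (ones *m ones^T)) =
    map_mx rc sqnorms *m (map_mx rc ones)^T + map_mx rc ones *m (map_mx rc sqnorms)^T
    - 2%:R *: (map_mx rc x *m (map_mx rc x)^T) - rc s *: (map_mx rc ones *m (map_mx rc ones)^T).
  by rewrite dist_mx_gram !(map_mxB, map_mxD, map_mxZ, map_mxM, map_trmx) rmorph_nat.
by rewrite map_gram form_gram_ones // -map_real_trC -map_mxM -trmx_mul.
Qed.

Lemma second_eig_dist_shift s : (d + 2 < n)%N ->
  (exists l, second_eig (dist_mx x - s *: Jmx R n) l) /\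
  (forall l, second_eig (dist_mx x - s *: Jmx R n) l -> l = s).
Proof.
move=> lt_d2n.
have A_sym : (dist_mx x - s *: Jmx R n)^T = dist_mx x - s *: Jmx R n.
  by rewrite linearB linearZ /= dist_mx_sym Jmx_sym.
have [P [r [P_unitary A_diag chA]]] := symmetric_spectral A_sym.
set w := \row_k rc (r k) in A_diag.
have shift_diag := unitary_diag_shift P_unitary w (rc s).
rewrite -A_diag in shift_diag.
apply: second_eig_eq chA _ _.
  have -> : #|[pred k | (s < r k)%R]| = #|[pred k | (0 < (w - const_mx (rc s)) 0 k)%R]|.
    by apply: eq_card => k; rewrite !inE !mxE subr_gt0 ltcR.
  apply: (card_pos_unitary_diag_le P_unitary (K := map_mx rc ones)) => z z_ones.
  rewrite -shift_diag form_dist_shift // mxE mulNr oppr_le0.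
  by rewrite mulr_ge0 ?ler0n // -dotmxE dnorm_ge0.
have -> : #|[pred k | (r k < s)%R]| = #|[pred k | (0 < (const_mx (rc s) - w) 0 k)%R]|.
  by apply: eq_card => k; rewrite !inE !mxE subr_gt0 ltcR.
have : (#|[pred k | (0 < (const_mx (rc s) - w) 0 k)%R]| <= 1 + d)%N.
  apply: (card_pos_unitary_diag_le P_unitary (K := row_mx (map_mx rc ones) (map_mx rc x))).
  move=> z; rewrite mul_mx_row => /eqP; rewrite row_mx_eq0 => /andP[/eqP z_ones /eqP z_x].
  rewrite -opprB linearN /= mulmxN mulNmx -shift_diag mulmxN mulNmx.
  by rewrite form_dist_shift // z_x mul0mx scaler0 oppr0 mxE.
lia.
Qed.

End DistanceMatrix.

Lemma same_Delta_Jmx (R : rcfType) n (D D' : 'M[R]_n) : (1 < n)%N ->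
  D^T = D -> D'^T = D' -> (forall i, D i i = 0) -> (forall i, D' i i = 0) ->
  same_Delta D' D -> exists c, D' = D + c *: Jmx R n.
Proof.
move=> lt1n D_sym D'_sym D_hollow D'_hollow Delta; pose E := D' - D.
have E_row i j k : i != j -> i != k -> E i j = E i k.
  move=> ij ik; rewrite !mxE; case: (ltngtP j k) => [jk|kj|/val_inj -> //].
    by have := Delta i j k ij ik jk; lra.
  by have := Delta i k j ik ij kj; lra.
have E_sym i j : E i j = E j i.
  by rewrite -{1}(trmxK E) mxE linearB /= D_sym D'_sym.
pose i0 := Ordinal (ltnW lt1n); pose i1 := Ordinal lt1n.
have E_off i j : i != j -> E i j = E i0 i1.
  move=> ij; case: (eqVneq i i0) => [i_eq | ii0]; first by rewrite i_eq in ij *; apply: E_row.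
  by rewrite (E_row i j i0) // E_sym; apply: E_row; rewrite // eq_sym.
exists (E i0 i1); apply/matrixP => i j; rewrite !mxE.
case: (eqVneq i j) => [<-|ij]; first by rewrite D_hollow D'_hollow subrr mulr0 addr0.
by have := E_off i j ij; rewrite !mxE => <-; rewrite subr0 mulr1 addrC subrK.
Qed.

Lemma dist_mx_shift_eq0 (R : rcfType) n d d' (x : 'M[R]_(n, d)) (y : 'M[R]_(n, d'))
    (c : R) : (d + 2 < n)%N -> (d' + 2 < n)%N ->
  dist_mx y = dist_mx x + c *: Jmx R n -> c = 0.
Proof.
move=> lt_d2n lt_d'2n Dyx.
have [[l x_l] x_uniq] := second_eig_dist_shift x (- c) lt_d2n.
have y_l : second_eig (dist_mx y - 0 *: Jmx R n) l.
  by rewrite scale0r subr0 Dyx; move: x_l; rewrite scaleNr opprK.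
move: (x_uniq l x_l); rewrite ((second_eig_dist_shift y 0 lt_d'2n).2 l y_l).
by move/eqP; rewrite eq_sym oppr_eq0 => /eqP.
Qed.

Unset Implicit Arguments.

Theorem theorem4 (R : rcfType) (n d : nat) (x : 'M[R]_(n, d)) :
  (d + 2 < n)%N ->
  [/\ (exists l : R, second_eig (centered (dist_mx x)) l),
      (forall l : R, second_eig (centered (dist_mx x)) l ->
         dist_mx x = centered (dist_mx x) + l *: Jmx R n),
      (forall (d' : nat) (y : 'M[R]_(n, d')), (d' + 2 < n)%N ->
         centered (dist_mx y) = centered (dist_mx x) -> dist_mx y = dist_mx x)
    & (forall (d' : nat) (y : 'M[R]_(n, d')), (d' + 2 < n)%N ->
         same_Delta (dist_mx y) (dist_mx x) -> dist_mx y = dist_mx x)].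
Proof.
move=> lt_d2n.
have shift_eq d' (y : 'M[R]_(n, d')) c : (d' + 2 < n)%N ->
    dist_mx y = dist_mx x + c *: Jmx R n -> dist_mx y = dist_mx x.
  by move=> lt_d'2n Dyx; rewrite Dyx (dist_mx_shift_eq0 lt_d2n lt_d'2n Dyx) scale0r addr0.
have [l_ex l_uniq] := second_eig_dist_shift x (sigma_mx (dist_mx x)) lt_d2n.
split=> // [l /l_uniq -> | d' y lt_d'2n Cyx | d' y lt_d'2n Delta].
- by rewrite subrK.
- apply: (shift_eq _ _ (sigma_mx (dist_mx y) - sigma_mx (dist_mx x)) lt_d'2n).
  rewrite -{1}[dist_mx y](subrK (sigma_mx (dist_mx y) *: Jmx R n)) -/(centered _) Cyx.
  by rewrite scalerBl [RHS]addrA [RHS]addrAC.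
- have [|c Dyx] := same_Delta_Jmx _ (dist_mx_sym x) (dist_mx_sym y) (dist_mx_diag x)
    (dist_mx_diag y) Delta; first lia.
  exact: shift_eq Dyx.
Qed.
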